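(* Let $X$ be a continuum, $K\subset X$ a subcontinuum and $x\in K$. If the quotient $X/K$ is coastal at the point $K$, then $X$ is coastal at $x$.
   Context: A continuum is a nondegenerate compact connected Hausdorff space. $X/K$ is the quotient of $X$ obtained by collapsing $K$ to a single point, also denoted $K$. For a continuum $Z$ and points $z,p$, $\kappa(z;p)$ is the union of all subcontinua $M\neq Z$ of $Z$ with $z\in M$, $p\notin M$. $Z$ is coastal at $z$ if $\kappa(z;p)$ is dense in $Z$ for some $p\neq z$. *)

From HB Require Import structures.
From mathcomp Require Import all_boot generic_quotient.
From mathcomp Require Import all_classical topology.

Set Implicit Arguments.
Unset Strict Implicit.
Unset Printing Implicit Defensive.

Local Open Scope classical_set_scope.
Local Open Scope quotient_scope.

Definition nondegenerate_set {T : Type} (A : set T) : Prop :=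
  exists a b, A a /\ A b /\ a <> b.

Definition continuum (T : topologicalType) : Prop :=
  [/\ hausdorff_space T, compact [set: T], connected [set: T]
    & nondegenerate_set [set: T]].

Definition subcontinuum {T : topologicalType} (M : set T) : Prop :=
  [/\ compact M, connected M & nondegenerate_set M].

Definition kappa {Z : topologicalType} (z p : Z) : set Z :=
  \bigcup_(M in [set M : set Z | [/\ subcontinuum M, M <> [set: Z], M z & ~ M p]]) M.

Definition coastal_at {Z : topologicalType} (z : Z) : Prop :=
  exists p : Z, p <> z /\ dense (kappa z p).

Section Collapse.
Variables (X : topologicalType) (K : set X).

Definition collapse_rel : rel X :=
  fun x y => (x == y) || (`[< K x >] && `[< K y >]).

Lemma collapse_refl : reflexive collapse_rel.
Proof. by move=> x; rewrite /collapse_rel eqxx. Qed.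

Lemma collapse_sym : symmetric collapse_rel.
Proof. by move=> x y; rewrite /collapse_rel eq_sym andbC. Qed.

Lemma collapse_trans : transitive collapse_rel.
Proof.
move=> y x z; rewrite /collapse_rel.
case/orP=> [/eqP->//|/andP[Kx Ky]]; case/orP=> [/eqP<-|/andP[_ Kz]].
  by rewrite Kx Ky orbT.
by rewrite Kx Kz orbT.
Qed.

Definition collapse_equiv : equiv_rel X :=
  EquivRel collapse_rel collapse_refl collapse_sym collapse_trans.

Definition collapse_space := quotient_topology {eq_quot collapse_equiv}.
End Collapse.

Definition collapse_pi (X : topologicalType) (K : set X) (x : X)
  : collapse_space K := \pi_{eq_quot collapse_equiv K} x.

From mathcomp Require Import all_boot generic_quotient.
From mathcomp Require Import all_classical topology urysohn.
Local Open Scope classical_set_scope.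

(* Let pi : X -> X/K be the quotient map.  For a proper subcontinuum M of X/K
   through the point K, the preimage pi^-1(M) is a subcontinuum of X
   containing K: it is closed because X/K is Hausdorff (K is closed in the
   compact Hausdorff space X), and it is connected because any separation of
   pi^-1(M) has the connected set K inside one piece, so both pieces are
   saturated and project to a separation of M.  Hence
   pi^-1(kappa(K; pi p)) is contained in kappa(x; p).  Finally the preimage of
   a dense set containing the point K is dense: an open set missing K is
   saturated, so its image is open in X/K. *)

Lemma denseS {T : topologicalType} (A B : set T) :
  A `<=` B -> dense A -> dense B.
Proof.
move=> AB dA O O0 oO; have [w [Ow Aw]] := dA O O0 oO.
by exists w; split; [|exact: AB].
Qed.

Lemma separated_closedl {T : topologicalType} (A B : set T) :
  separated A B -> closed (A `|` B) -> closed A.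
Proof.
move=> [clAB _] /closure_id cAB; rewrite closure_id; apply/seteqP.
split=> [w Aw|w clAw]; first exact: subset_closure.
have [//|Bw] : (A `|` B) w by rewrite cAB; apply: closureS clAw => ? ?; left.
by have : (closure A `&` B) w by []; rewrite clAB.
Qed.

Lemma closed_disjoint_separated {T : topologicalType} (A B : set T) :
  closed A -> closed B -> A `&` B = set0 -> separated A B.
Proof. by rewrite /separated => /closure_id <- /closure_id <-. Qed.

Lemma mem_kappa_self {Z : topologicalType} (z p : Z) :
  kappa z p !=set0 -> kappa z p z.
Proof. by case=> w [M [sM MT Mz Mp] _]; exists M. Qed.

Section Collapse.
Context {X : topologicalType} {K : set X}.
Local Notation Q := (collapse_space K).
Local Notation pi := (@collapse_pi X K).

Lemma collapse_piP (u v : X) : pi u = pi v <-> u = v \/ K u /\ K v.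
Proof.
split=> [/eqquotP/orP[/eqP|/andP[/asboolP Ku /asboolP Kv]]|]; [by left|by right|].
case=> [->//|[Ku Kv]]; apply/eqquotP/orP; right.
by apply/andP; split; apply/asboolP.
Qed.

Lemma collapse_pi_surj (q : Q) : exists u, pi u = q.
Proof. by exists (repr q); exact: reprK. Qed.

Lemma image_collapse_preimage (M : set Q) : pi @` (pi @^-1` M) = M.
Proof.
apply: image_preimage; apply/seteqP; split=> // q _.
by have [u <-] := collapse_pi_surj q; exists u.
Qed.

Lemma preimage_collapse_image (S : set X) :
  K `<=` S \/ S `&` K = set0 -> pi @^-1` (pi @` S) = S.
Proof.
move=> satS; apply/seteqP; split=> [w [u Su /collapse_piP[<-//|[Ku Kw]]]|];
  last exact: preimage_image.
case: satS => [KS|SK]; first exact: KS.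
by have : (S `&` K) u by []; rewrite SK.
Qed.

Lemma open_collapse (U : set Q) : open U <-> open (pi @^-1` U).
Proof. by []. Qed.

Lemma closed_collapse (U : set Q) : closed U <-> closed (pi @^-1` U).
Proof. by rewrite -openC open_collapse -openC preimage_setC. Qed.

Lemma collapse_preimage_connected (M : set Q) :
  connected K -> closed M -> connected M -> K `<=` pi @^-1` M ->
  connected (pi @^-1` M).
Proof.
move=> conK cM conM KM; apply/connectedP => E [E0 ME sepE].
have cEE : closed (E false `|` E true) by rewrite -ME; exact/closed_collapse.
have cE b : closed (E b).
  case: b; last exact: separated_closedl sepE cEE.
  by rewrite setUC in cEE; rewrite separatedC in sepE; exact: separated_closedl cEE.
have disjE := separated_disjoint sepE.
have [c KEc] : exists c, K `<=` E c.
  have KE : K `<=` E false `|` E true by rewrite -ME.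
  by have [] := connected_subset sepE KE conK; [exists false|exists true].
have satE b : K `<=` E b \/ E b `&` K = set0.
  have [<-|ncb] := eqVneq c b; [by left|right].
  apply/seteqP; split=> // w [Ebw /KEc Ecw].
  suff : (E false `&` E true) w by rewrite disjE.
  by case: b c ncb Ebw Ecw {KEc} => -[] // _ Ew Ew'; split.
move/connectedP: conM => /(_ (fun b => pi @` E b)); apply; split.
- by move=> b; have [w Ew] := E0 b; exists (pi w), w.
- by rewrite -image_setU -ME image_collapse_preimage.
- have cF b : closed (pi @` E b).
    by apply/closed_collapse; rewrite preimage_collapse_image.
  apply: closed_disjoint_separated (cF false) (cF true) _.
  apply/seteqP; split=> // _ [[u Efu <-] Etu].
  have : (pi @^-1` (pi @` E true)) u by [].
  rewrite preimage_collapse_image // => {}Etu.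
  by have : (E false `&` E true) u by []; rewrite disjE.
Qed.

Lemma dense_collapse_preimage (D : set Q) :
  K `<=` pi @^-1` D -> dense D -> dense (pi @^-1` D).
Proof.
move=> KD dD O [o Oo] oO.
have [[k [Ok Kk]]|/nonemptyPn OK] := pselect (O `&` K !=set0).
  by exists k; split; [|exact: KD].
have satO : pi @^-1` (pi @` O) = O by apply: preimage_collapse_image; right.
have [_ [[u Ou <-] Du]] : pi @` O `&` D !=set0.
  by apply: dD; [exists (pi o), o|apply/open_collapse; rewrite satO].
by exists u.
Qed.

Hypotheses (hX : hausdorff_space X) (cX : compact [set: X]).

Lemma collapse_separate (y z : X) : closed K -> ~ K z -> pi y <> pi z ->
  exists U V : set Q, [/\ open U, open V, U (pi y), V (pi z) & U `&` V = set0].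
Proof.
move=> cK nKz yz.
have cKy : closed (K `|` [set y]).
  exact/closedU/accessible_closed_set1/hausdorff_accessible.
have nKyz : ~ (K `|` [set y]) z by case=> // zy; apply: yz; rewrite zy.
have /regular_openP/(_ _ cKy nKyz) [V [U [oV oU Vz KyU UV]]] :
    {for z, regular_space X}.
  by apply: (@compact_regular X z setT hX cX); exact: filterT.
have KU : K `<=` U by move=> k Kk; apply: KyU; left.
have VK : (V `&` ~` K) `&` K = set0.
  by apply/seteqP; split=> // w [[_]].
exists (pi @` U), (pi @` (V `&` ~` K)); split.
- by apply/open_collapse; rewrite preimage_collapse_image //; left.
- apply/open_collapse; rewrite preimage_collapse_image //; last by right.
  exact/openI/closed_openC.
- by exists y => //; apply: KyU; right.
- by exists z.
apply/seteqP; split=> // _ [[u Uu <-] [v [Vv nKv] /esym/collapse_piP]].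
case=> [uv|[_ //]]; move: Uu; rewrite uv => Uv.
by have : (V `&` U) v by []; rewrite UV.
Qed.

Lemma collapse_hausdorff : closed K -> hausdorff_space Q.
Proof.
move=> cK; rewrite open_hausdorff => a b.
have [y <-] := collapse_pi_surj a; have [z <-] := collapse_pi_surj b.
move=> /eqP ab; wlog nKz : y z ab / ~ K z.
  move=> gen; have [Kz|] := pselect (K z); last exact: gen.
  have nKy : ~ K y by move=> Ky; apply: ab; apply/collapse_piP; right.
  have [[U V] /= [Uz Vy] [oU oV UV]] := gen z y (nesym ab) nKy.
  by exists (V, U); rewrite // setIC.
have [U [V [oU oV Uy Vz UV]]] := collapse_separate _ _ cK nKz ab.
by exists (U, V); rewrite ?inE //; split=> //; apply/eqP.
Qed.

Lemma collapse_preimage_subcontinuum (M : set Q) :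
  subcontinuum K -> subcontinuum M -> K `<=` pi @^-1` M ->
  subcontinuum (pi @^-1` M).
Proof.
move=> [cptK conK [k1 [k2 [Kk1 [Kk2 k12]]]]] [cptM conM _] KM.
have cK := compact_closed hX cptK.
have cM : closed M by exact: compact_closed (collapse_hausdorff cK) cptM.
split.
- by apply: (subclosed_compact _ cX) => //; exact/closed_collapse.
- exact: collapse_preimage_connected.
- by exists k1, k2; split; [exact: KM|split; [exact: KM|]].
Qed.

Lemma collapse_preimage_kappa (x p : X) : subcontinuum K -> K x ->
  pi @^-1` kappa (pi x) (pi p) `<=` kappa x p.
Proof.
move=> sK Kx w [M [sM MT Mx Mp] Mw]; exists (pi @^-1` M) => //; split=> //.
- apply: collapse_preimage_subcontinuum => // k Kk /=.
  by have -> : pi k = pi x by apply/collapse_piP; right.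
- by move=> MX; apply: Mp; have : [set: X] p by []; rewrite -MX.
Qed.

End Collapse.

Theorem mainTheorem15 (X : topologicalType) (K : set X) (x : X) :
  continuum X -> subcontinuum K -> K x ->
  coastal_at (collapse_pi K x) -> coastal_at x.
Proof.
move=> [hX cX _ _] sK Kx [q [qx dk]].
have [p pE] := collapse_pi_surj q; rewrite -pE in qx dk.
exists p; split; first by move=> px; apply: qx; rewrite px.
have kappa_x : kappa (collapse_pi K x) (collapse_pi K p) (collapse_pi K x).
  apply: mem_kappa_self; rewrite -[kappa _ _]setTI.
  by apply: dk; [exists (collapse_pi K x)|exact: openT].
apply: denseS (collapse_preimage_kappa hX cX _ p sK Kx) _.
apply: dense_collapse_preimage dk => k Kk /=.
by have -> : collapse_pi K k = collapse_pi K x by apply/collapse_piP; right.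
Qed.
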